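(* Let $G$ be an affine smooth finitely presented group scheme over a commutative ring $K$, let $R$ be a Noetherian $K$-algebra, $m\in\mathbb N$ and $s\in R$, and suppose that the restriction of the localization homomorphism $\lambda_s:R\to R_s$ to the ideal $s^mR$ is injective. Then for every $a\in G(R_s)$ there exists $k\in\mathbb N$ such that $[a,\lambda_s(b)]\in\lambda_s\bigl(G(R,s^mR)\bigr)$ for all $b\in G(R,s^kR)$.
   Context: $R_s$ is the localization of $R$ at the multiplicative set generated by $s$, and $\lambda_s$ also denotes the induced map $G(R)\to G(R_s)$. $G(R,\mathfrak q)=\ker(G(R)\to G(R/\mathfrak q))$. $[x,y]=x^{-1}y^{-1}xy$. *)

From HB Require Import structures.
From Stdlib Require Import List.
From mathcomp Require Import all_boot all_order all_algebra.
Set Implicit Arguments. Unset Strict Implicit. Unset Printing Implicit Defensive.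
Import GRing.Theory.
Local Open Scope ring_scope.

(* A "K-algebra" is a commutative (possibly zero) ring C together with a ring
   morphism iC : K -> C.  K-algebra morphisms are ring morphisms commuting
   with the structure maps. *)

Inductive pexpr (K : Type) : Type :=
| PVar of nat
| PC of K
| PAdd of pexpr K & pexpr K
| PMul of pexpr K & pexpr K
| PNeg of pexpr K.

Fixpoint peval (K : comPzRingType) (C : comPzRingType) (iC : {rmorphism K -> C})
    (e : nat -> C) (p : pexpr K) : C :=
  match p with
  | PVar k => e k
  | PC c => iC c
  | PAdd p q => peval iC e p + peval iC e q
  | PMul p q => peval iC e p * peval iC e q
  | PNeg p => - peval iC e p
  end.

(* Presentation of an affine finitely presented group scheme G over K:
   G(C) = { x in C^n | r(x) = 0 for all r in grels },
   with multiplication, inverse and unit given by polynomials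
   (gmul i uses variables X_0..X_{n-1} for the first factor and
    X_n..X_{2n-1} for the second factor). *)
Record fpgroup (K : comPzRingType) := FPGroup {
  gdim : nat;
  grels : seq (pexpr K);
  gmul : 'I_gdim -> pexpr K;
  ginv : 'I_gdim -> pexpr K;
  gone : 'I_gdim -> K
}.

Section Points.
Variables (K : comPzRingType) (G : fpgroup K).
Variables (C : comPzRingType) (iC : {rmorphism K -> C}).

Definition env1 (x : 'I_(gdim G) -> C) : nat -> C :=
  fun k => match insub k with Some i => x i | None => 0 end.
Definition env2 (x y : 'I_(gdim G) -> C) : nat -> C :=
  fun k => if (k < gdim G)%N then env1 x k else env1 y (k - gdim G)%N.

Definition is_point (x : 'I_(gdim G) -> C) : Prop :=
  forall r, In r (grels G) -> peval iC (env1 x) r = 0.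

Definition gmulP (x y : 'I_(gdim G) -> C) : 'I_(gdim G) -> C :=
  fun i => peval iC (env2 x y) (gmul i).
Definition ginvP (x : 'I_(gdim G) -> C) : 'I_(gdim G) -> C :=
  fun i => peval iC (env1 x) (ginv i).
Definition goneP : 'I_(gdim G) -> C := fun i => iC (gone i).

Definition peq (x y : 'I_(gdim G) -> C) : Prop := forall i, x i = y i.

Definition gcomm (x y : 'I_(gdim G) -> C) : 'I_(gdim G) -> C :=
  gmulP (gmulP (gmulP (ginvP x) (ginvP y)) x) y.

(* x lies in the principal congruence subgroup G(C, tC) = ker(G(C) -> G(C/tC)) *)
Definition in_cong (t : C) (x : 'I_(gdim G) -> C) : Prop :=
  is_point x /\ forall i, exists c, x i - goneP i = t * c.
End Points.
Arguments env1 {K} G {C} x.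
Arguments env2 {K} G {C} x y.
Arguments is_point {K} G {C} iC x.
Arguments gmulP {K} G {C} iC x y.
Arguments ginvP {K} G {C} iC x.
Arguments goneP {K} G {C} iC.
Arguments peq {K} G {C} x y.
Arguments gcomm {K} G {C} iC x y.
Arguments in_cong {K} G {C} iC t x.

Definition is_group_scheme (K : comPzRingType) (G : fpgroup K) : Prop :=
  forall (C : comPzRingType) (iC : {rmorphism K -> C}),
  [/\ is_point G iC (goneP G iC),
      (forall x y, is_point G iC x -> is_point G iC y ->
         is_point G iC (gmulP G iC x y))
    & (forall x, is_point G iC x -> is_point G iC (ginvP G iC x))] /\
  [/\
      (forall x y z, is_point G iC x -> is_point G iC y -> is_point G iC z ->
         peq G (gmulP G iC (gmulP G iC x y) z) (gmulP G iC x (gmulP G iC y z))),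
      (forall x, is_point G iC x ->
         peq G (gmulP G iC (goneP G iC) x) x /\ peq G (gmulP G iC x (goneP G iC)) x)
    & (forall x, is_point G iC x ->
         peq G (gmulP G iC (ginvP G iC x) x) (goneP G iC) /\
         peq G (gmulP G iC x (ginvP G iC x)) (goneP G iC))].

Definition is_ideal (C : comPzRingType) (I : C -> Prop) : Prop :=
  [/\ I 0, (forall a b, I a -> I b -> I (a + b)) & (forall r a, I a -> I (r * a))].

(* Smoothness (formal smoothness; finite presentation is built in):
   for every K-algebra C and every square-zero ideal I of C, every point of G
   with values in C/I lifts to a point with values in C.  A (C/I)-point is
   represented by a lift x : C^n with r(x) in I for all relations r. *)
Definition smooth_fpgroup (K : comPzRingType) (G : fpgroup K) : Prop :=
  forall (C : comPzRingType) (iC : {rmorphism K -> C}) (I : C -> Prop),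
    is_ideal I -> (forall a b, I a -> I b -> a * b = 0) ->
    forall x : 'I_(gdim G) -> C,
      (forall r, In r (grels G) -> I (peval iC (env1 G x) r)) ->
      exists y : 'I_(gdim G) -> C,
        is_point G iC y /\ forall i, I (y i - x i).

Definition noetherian (C : comPzRingType) : Prop :=
  forall I : nat -> C -> Prop,
    (forall n, is_ideal (I n)) ->
    (forall n a, I n a -> I n.+1 a) ->
    exists N, forall n, (N <= n)%N -> forall a, I n a -> I N a.

(* lam : R -> S is the localization of R at the multiplicative set {s^n}
   (characterization as in Mathlib's IsLocalization). *)
Definition is_localization_at (R S : comPzRingType) (lam : {rmorphism R -> S})
    (s : R) : Prop :=
  [/\ exists u, lam s * u = 1,
      (forall y, exists r n, y * lam s ^+ n = lam r)
    & (forall r, lam r = 0 -> exists k, s ^+ k * r = 0)].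

From HB Require Import structures.
From mathcomp Require Import all_boot all_order all_algebra ring.
From Stdlib Require Import FunctionalExtensionality.
Import GRing.Theory.
Local Open Scope ring_scope.
Set Implicit Arguments. Unset Strict Implicit. Unset Printing Implicit Defensive.

(* Polynomial maps are continuous for the s-adic topology of R_s: if a point
   x0 of S^n has denominators bounded by s^d, there is D such that whenever
   x - x0 lies in s^-d lam(s^k R), then p(x) - p(x0) lies in s^-D lam(s^k R),
   with D independent of k.  The commutator map y |-> [a, y] is polynomial and
   sends 1 to 1, so for y = lam b with b in G(R, s^(m+D) R) we get
   [a, y] - 1 in lam(s^m R).  This gives c = 1 + s^m r with lam c = [a, y];
   the relations of G vanish on c because they vanish on 1 modulo s^m and on
   lam c, and lam is injective on s^m R. *)

Lemma fin_ex_monotone (I : finType) (P : I -> nat -> Prop) :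
  (forall i D D', (D <= D')%N -> P i D -> P i D') ->
  (forall i, exists D, P i D) -> exists D, forall i, P i D.
Proof.
move=> mono H; have [f Hf] := fin_all_exists H.
by exists (\max_i f i) => i; apply: (mono i (f i)) => //; apply: leq_bigmax.
Qed.

Section SadicContinuity.
Variables (K R S : comPzRingType) (iR : {rmorphism K -> R}) (iS : {rmorphism K -> S}).
Variables (lam : {rmorphism R -> S}) (s : R).
Hypothesis lam_alg : forall c, lam (iR c) = iS c.

(* z = lam (s^k r) / lam s ^ D: a fraction with denominator s^D whose
   numerator lies in s^k R. *)
Definition sfrac (k D : nat) (z : S) := exists r, z * lam s ^+ D = lam (s ^+ k * r).

Lemma sfrac_mono k D D' z : (D <= D')%N -> sfrac k D z -> sfrac k D' z.
Proof.
move=> le [r Hr]; exists (r * s ^+ (D' - D)).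
by rewrite mulrA rmorphM rmorphXn -Hr -mulrA -exprD subnKC.
Qed.

Lemma sfrac_weaken k k' D z : (k' <= k)%N -> sfrac k D z -> sfrac k' D z.
Proof.
move=> le [r Hr]; exists (s ^+ (k - k') * r).
by rewrite Hr mulrA -exprD subnKC.
Qed.

Lemma sfrac0 k D : sfrac k D 0.
Proof. by exists 0; rewrite mul0r mulr0 rmorph0. Qed.

Lemma sfrac_lam r : sfrac 0 0 (lam r).
Proof. by exists r; rewrite !expr0 mulr1 mul1r. Qed.

Lemma sfracD k D x y : sfrac k D x -> sfrac k D y -> sfrac k D (x + y).
Proof. by move=> [r Hr] [r' Hr']; exists (r + r'); rewrite mulrDl Hr Hr' -rmorphD mulrDr. Qed.

Lemma sfracN k D x : sfrac k D x -> sfrac k D (- x).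
Proof. by move=> [r Hr]; exists (- r); rewrite mulNr Hr mulrN rmorphN. Qed.

Lemma sfracM k l D1 D2 x y :
  sfrac k D1 x -> sfrac l D2 y -> sfrac (k + l) (D1 + D2) (x * y).
Proof.
move=> [r Hr] [r' Hr']; exists (r * r').
by rewrite exprD mulrACA Hr Hr' -rmorphM exprD mulrACA.
Qed.

Lemma sfrac_cancel u m D z :
  lam s * u = 1 -> sfrac (m + D) D z -> exists r, z = lam (s ^+ m * r).
Proof.
move=> Hu [r Hr]; exists r.
have -> : z = z * lam s ^+ D * u ^+ D by rewrite -mulrA -exprMn Hu expr1n mulr1.
rewrite Hr exprD !rmorphM !rmorphXn.
by rewrite mulrAC -(mulrA _ (lam s ^+ D)) -exprMn Hu expr1n mulr1.
Qed.

Lemma sfrac_peval (e0 : nat -> S) d (p : pexpr K) :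
  (forall j, sfrac 0 d (e0 j)) ->
  exists D, sfrac 0 D (peval iS e0 p) /\
    forall k e, (forall j, sfrac k d (e j - e0 j)) ->
      sfrac k D (peval iS e p - peval iS e0 p).
Proof.
move=> He0; elim: p => [j|c|p [D1 [B1 P1]] q [D2 [B2 P2]]|p [D1 [B1 P1]] q [D2 [B2 P2]]|
                        p [D [B P]]] /=.
- by exists d; split.
- exists 0%N; split; first by rewrite -lam_alg; apply: sfrac_lam.
  by move=> k e _; rewrite subrr; apply: sfrac0.
- have le1 := leq_addr D2 D1; have le2 := leq_addl D1 D2.
  exists (D1 + D2)%N; split; first exact: sfracD (sfrac_mono le1 B1) (sfrac_mono le2 B2).
  move=> k e He; rewrite opprD addrACA.
  exact: sfracD (sfrac_mono le1 (P1 k e He)) (sfrac_mono le2 (P2 k e He)).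
- exists (D1 + D2)%N; split; first by have := sfracM B1 B2; rewrite addn0.
  move=> k e He; set x := peval iS e0 p; set y := peval iS e0 q.
  have dx := P1 k e He; have dy := P2 k e He.
  set x' := peval iS e p in dx *; set y' := peval iS e q in dy *.
  have -> : x' * y' - x * y = (x' - x) * (y' - y) + (x * (y' - y) + (x' - x) * y) by ring.
  apply: sfracD; first exact: sfrac_weaken (leq_addr k k) (sfracM dx dy).
  by apply: sfracD; [exact: sfracM B1 dy | rewrite -[k]addn0; exact: sfracM dx B2].
- exists D; split; first exact: sfracN.
  by move=> k e He; rewrite -opprD; apply: sfracN; apply: P.
Qed.

(* The denominator bound D depends on x0 and d but not on the precision k. *)
Definition sadic_cont (I J : Type) (F : (I -> S) -> J -> S) : Prop :=
  forall x0 d, (forall i, sfrac 0 d (x0 i)) ->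
  exists D, (forall j, sfrac 0 D (F x0 j)) /\
    forall k x, (forall i, sfrac k d (x i - x0 i)) ->
      forall j, sfrac k D (F x j - F x0 j).

Lemma sadic_cont_id (I : Type) : sadic_cont (fun x : I -> S => x).
Proof. by move=> x0 d Hx0; exists d. Qed.

Lemma sadic_cont_const (I J : Type) (a : J -> S) :
  (exists D, forall j, sfrac 0 D (a j)) -> sadic_cont (fun _ : I -> S => a).
Proof.
move=> [D HD] x0 d _; exists D; split=> // k x _ j.
by rewrite subrr; apply: sfrac0.
Qed.

Lemma sadic_cont_comp (I J L : Type) (F : (I -> S) -> J -> S) (H : (J -> S) -> L -> S) :
  sadic_cont F -> sadic_cont H -> sadic_cont (fun x => H (F x)).
Proof.
move=> cF cH x0 d Hx0; have [D1 [B1 P1]] := cF x0 d Hx0.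
have [D2 [B2 P2]] := cH _ _ B1; exists D2; split=> // k x Hx.
exact: P2 (P1 k x Hx).
Qed.

Lemma sadic_cont_peval (I : finType) (f : I -> pexpr K) :
  sadic_cont (fun (e : nat -> S) i => peval iS e (f i)).
Proof.
move=> e0 d He0.
have [D HD] : exists D, forall i, sfrac 0 D (peval iS e0 (f i)) /\
    forall k e, (forall j, sfrac k d (e j - e0 j)) ->
      sfrac k D (peval iS e (f i) - peval iS e0 (f i)).
  apply: fin_ex_monotone => [i D D' le [B P]|i]; last exact: sfrac_peval.
  by split=> [|k e He]; [exact: sfrac_mono le B | exact: sfrac_mono le (P k e He)].
by exists D; split=> [i|k e He i]; [case: (HD i) | case: (HD i) => _; apply].
Qed.

Variable G : fpgroup K.

Lemma sadic_cont_env1 : sadic_cont (env1 G).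
Proof.
move=> x0 d Hx0; exists d; split=> [j|k x Hx j]; rewrite /env1; case: insub => //.
- exact: sfrac0.
- by rewrite subrr; apply: sfrac0.
Qed.

Lemma sadic_cont_env2 (I : Type) (F H : (I -> S) -> 'I_(gdim G) -> S) :
  sadic_cont F -> sadic_cont H -> sadic_cont (fun x => env2 G (F x) (H x)).
Proof.
move=> cF cH x0 d Hx0.
have [D1 [B1 P1]] := sadic_cont_comp cF sadic_cont_env1 Hx0.
have [D2 [B2 P2]] := sadic_cont_comp cH sadic_cont_env1 Hx0.
have le1 := leq_addr D2 D1; have le2 := leq_addl D1 D2.
exists (D1 + D2)%N; split=> [j|k x Hx j]; rewrite /env2; case: ifP => _.
- exact: sfrac_mono le1 (B1 j).
- exact: sfrac_mono le2 (B2 _).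
- exact: sfrac_mono le1 (P1 k x Hx j).
- exact: sfrac_mono le2 (P2 k x Hx _).
Qed.

Lemma sadic_cont_gmul (I : Type) (F H : (I -> S) -> 'I_(gdim G) -> S) :
  sadic_cont F -> sadic_cont H -> sadic_cont (fun x => gmulP G iS (F x) (H x)).
Proof. by move=> cF cH; apply: sadic_cont_comp (sadic_cont_env2 cF cH) (sadic_cont_peval _). Qed.

Lemma sadic_cont_ginv (I : Type) (F : (I -> S) -> 'I_(gdim G) -> S) :
  sadic_cont F -> sadic_cont (fun x => ginvP G iS (F x)).
Proof. by move=> cF; apply: sadic_cont_comp (sadic_cont_comp cF sadic_cont_env1) (sadic_cont_peval _). Qed.

Lemma sadic_cont_gcomm (a : 'I_(gdim G) -> S) :
  (exists D, forall i, sfrac 0 D (a i)) -> sadic_cont (gcomm G iS a).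
Proof.
move=> Ba; have ca := sadic_cont_const (I := 'I_(gdim G)) Ba.
have cinv := sadic_cont_ginv (@sadic_cont_id 'I_(gdim G)).
exact: sadic_cont_gmul (sadic_cont_gmul (sadic_cont_gmul (sadic_cont_ginv ca) cinv) ca)
                       (@sadic_cont_id _).
Qed.

End SadicContinuity.

Section GroupPoints.
Variables (K C : comPzRingType) (G : fpgroup K) (iC : {rmorphism K -> C}).
Hypothesis HG : is_group_scheme G.

Lemma peq_eq (x y : 'I_(gdim G) -> C) : peq G x y -> x = y.
Proof. exact: functional_extensionality. Qed.

Lemma is_point_gcomm x y :
  is_point G iC x -> is_point G iC y -> is_point G iC (gcomm G iC x y).
Proof.
have [[_ PM PI] _] := HG iC; move=> Hx Hy.
exact: PM _ _ (PM _ _ (PM _ _ (PI _ Hx) (PI _ Hy)) Hx) Hy.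
Qed.

Lemma gcommg1 x : is_point G iC x -> gcomm G iC x (goneP G iC) = goneP G iC.
Proof.
have [[P1 _ PI] [_ Pmul1 PmulV]] := HG iC; move=> Hx.
have invg1 : ginvP G iC (goneP G iC) = goneP G iC.
  have [_ h1] := PmulV _ P1; have [h2 _] := Pmul1 _ (PI _ P1).
  by apply: peq_eq => i; rewrite -(h2 i) (h1 i).
rewrite /gcomm invg1 (peq_eq (Pmul1 _ (PI _ Hx)).2) (peq_eq (PmulV _ Hx).1).
exact: peq_eq (Pmul1 _ P1).2.
Qed.
End GroupPoints.

Lemma peval_congr (K C : comPzRingType) (iC : {rmorphism K -> C}) (q : C) e e0 p :
  (forall k, exists c, e k - e0 k = q * c) ->
  exists c, peval iC e p - peval iC e0 p = q * c.
Proof.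
move=> H; elim: p => [j|c|p [c1 h1] r [c2 h2]|p [c1 h1] r [c2 h2]|p [c1 h1]] /=.
- exact: H.
- by exists 0; rewrite subrr mulr0.
- by exists (c1 + c2); rewrite mulrDr -h1 -h2; ring.
- exists (c1 * peval iC e r + peval iC e0 p * c2).
  have -> : peval iC e p * peval iC e r - peval iC e0 p * peval iC e0 r =
    (peval iC e p - peval iC e0 p) * peval iC e r +
     peval iC e0 p * (peval iC e r - peval iC e0 r) by ring.
  by rewrite h1 h2; ring.
- by exists (- c1); rewrite mulrN -h1; ring.
Qed.

Section AlgebraMorphism.
Variables (K R S : comPzRingType) (iR : {rmorphism K -> R}) (iS : {rmorphism K -> S}).
Variable lam : {rmorphism R -> S}.
Hypothesis lam_alg : forall c, lam (iR c) = iS c.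
Variable G : fpgroup K.

Lemma peval_rmorph e p : lam (peval iR e p) = peval iS (fun k => lam (e k)) p.
Proof.
elim: p => [j|c|p h1 q h2|p h1 q h2|p h1] //=.
- by rewrite rmorphD h1 h2.
- by rewrite rmorphM h1 h2.
- by rewrite rmorphN h1.
Qed.

Lemma peval_env1_rmorph x p :
  lam (peval iR (env1 G x) p) = peval iS (env1 G (fun i => lam (x i))) p.
Proof.
rewrite peval_rmorph; congr peval; apply: functional_extensionality => k.
by rewrite /env1; case: insub => //; rewrite rmorph0.
Qed.

Lemma is_point_rmorph x : is_point G iR x -> is_point G iS (fun i => lam (x i)).
Proof. by move=> Hx r Hr; rewrite -peval_env1_rmorph Hx // rmorph0. Qed.

Lemma is_point_of_rmorph q x x0 :
  (forall r, lam (q * r) = 0 -> q * r = 0) -> is_point G iR x0 ->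
  (forall i, exists c, x i - x0 i = q * c) ->
  is_point G iS (fun i => lam (x i)) -> is_point G iR x.
Proof.
move=> inj Hx0 Hcong Hlx r Hr.
have [w Hw] : exists w, peval iR (env1 G x) r - peval iR (env1 G x0) r = q * w.
  apply: peval_congr => k; rewrite /env1; case: insub => [i|]; first exact: Hcong.
  by exists 0; rewrite subrr mulr0.
move: Hw; rewrite Hx0 // subr0 => Hw.
by rewrite Hw; apply: inj; rewrite -Hw peval_env1_rmorph Hlx.
Qed.

Lemma cong_lift q (z : 'I_(gdim G) -> S) :
  (forall r, lam (q * r) = 0 -> q * r = 0) -> is_point G iR (goneP G iR) ->
  is_point G iS z -> (forall i, exists r, z i - goneP G iS i = lam (q * r)) ->
  exists c, in_cong G iR q c /\ peq G (fun i => lam (c i)) z.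
Proof.
move=> inj one_pt z_pt /fin_all_exists[r Hr].
set c := fun i => goneP G iR i + q * r i.
have lam_c : (fun i => lam (c i)) = z.
  apply: functional_extensionality => i.
  by rewrite /c rmorphD -Hr /goneP lam_alg addrC subrK.
have c_cong : forall i, exists c', c i - goneP G iR i = q * c'.
  by move=> i; exists (r i); rewrite /c addrAC subrr add0r.
exists c; split; last by rewrite lam_c.
split=> //; apply: is_point_of_rmorph inj one_pt c_cong _.
by rewrite lam_c.
Qed.
End AlgebraMorphism.

Theorem mainTheorem16
  (K : comPzRingType) (G : fpgroup K)
  (HG : is_group_scheme G) (Hsm : smooth_fpgroup G)
  (R : comPzRingType) (iR : {rmorphism K -> R}) (HR : noetherian R)
  (m : nat) (s : R)
  (S : comPzRingType) (iS : {rmorphism K -> S}) (lam : {rmorphism R -> S})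
  (Hlam_alg : forall c, lam (iR c) = iS c)
  (Hloc : is_localization_at lam s)
  (Hinj : forall r : R, lam (s ^+ m * r) = 0 -> s ^+ m * r = 0) :
  forall a : 'I_(gdim G) -> S, is_point G iS a ->
  exists k : nat,
    forall b : 'I_(gdim G) -> R, in_cong G iR (s ^+ k) b ->
    exists c : 'I_(gdim G) -> R,
      in_cong G iR (s ^+ m) c /\
      peq G (fun i => lam (c i)) (gcomm G iS a (fun i => lam (b i))).
Proof.
move=> a Ha; have [[u Hu] Hfrac _] := Hloc.
have Ba : exists D, forall i, sfrac lam s 0 D (a i).
  apply: fin_ex_monotone => [i D D' le|i]; first exact: sfrac_mono.
  by have [r [n Hn]] := Hfrac (a i); exists n, r; rewrite mul1r.
have B1 : forall i, sfrac lam s 0 0 (goneP G iS i).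
  by move=> i; rewrite /goneP -Hlam_alg; apply: sfrac_lam.
have [D [_ Pcomm]] := sadic_cont_gcomm Hlam_alg Ba B1.
exists (m + D)%N => b [Hb Hbcong]; set y := fun i => lam (b i).
have Hy : forall i, sfrac lam s (m + D) 0 (y i - goneP G iS i).
  move=> i; have [c Hc] := Hbcong i; exists c.
  by rewrite expr0 mulr1 /y /goneP -Hlam_alg -rmorphB Hc.
have {}Pcomm := Pcomm _ _ Hy; rewrite gcommg1 // in Pcomm.
have [[one_pt _ _] _] := HG R iR.
have comm_pt : is_point G iS (gcomm G iS a y).
  by apply: is_point_gcomm => //; apply: is_point_rmorph.
exact (cong_lift Hlam_alg Hinj one_pt comm_pt (fun i => sfrac_cancel Hu (Pcomm i))).
Qed.
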